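(* Let $Q$ be a locally point symmetric convex polytope in $\mathbb{R}^D$, and let $\mathbf{k} \in Q-Q$. The following statements are equivalent: (i) $Q\cap (Q-\mathbf{k})$ consists of a single point, i.e., $\mathbf{k}$ is a uniquely formed difference in $Q-Q$; (ii) $\mathbf{k}$ is a vertex of the polytope $Q-Q$; (iii) $\mathbf{k} = \mathbf{u}-\mathbf{v}$ for some strictly antipodal vertices $\mathbf{u}$ and $\mathbf{v}$ of $Q$.
   Context: $Q-Q=\{\mathbf{x}-\mathbf{y}:\mathbf{x},\mathbf{y}\in Q\}$ and $Q-\mathbf{k}=\{\mathbf{x}-\mathbf{k}:\mathbf{x}\in Q\}$. A vector $\mathbf{k}\in Q-Q$ is uniquely formed if there is a unique pair $\mathbf{s}_1,\mathbf{s}_2\in Q$ with $\mathbf{s}_1-\mathbf{s}_2=\mathbf{k}$. Two vertices $\mathbf{u},\mathbf{v}$ of a convex polytope $Q$ are strictly antipodal if there exist parallel supporting hyperplanes $H_1,H_2$ of $Q$ with $H_1\cap Q=\{\mathbf{u}\}$ and $H_2 \cap Q = \{\mathbf{v}\}$. The supporting cone of $Q$ at a vertex $\mathbf{v}$ is $C(\mathbf{v}) = \mathbf{v} + \bigcup_{\lambda \ge 0}\lambda(Q - \mathbf{v})$. A convex polytope $Q$ with $m$ vertices is locally point symmetric if its vertices can be partitioned into $m/2$ pairs of strictly antipodal vertices such that for each pair $\{\mathbf{u},\mathbf{v}\}$, $C(\mathbf{u}) - \mathbf{u} = \mathbf{v} - C(\mathbf{v})$. *)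

From HB Require Import structures.
From mathcomp Require Import all_boot all_order all_algebra.
From mathcomp Require Import reals.
Set Implicit Arguments. Unset Strict Implicit. Unset Printing Implicit Defensive.
Import Order.TTheory GRing.Theory Num.Theory.
Local Open Scope ring_scope.

Section Defs.
Variables (R : realType) (D : nat).
Notation point := 'rV[R]_D.

Definition dot (c x : point) : R := \sum_(i < D) c 0 i * x 0 i.

Definition conv (S : seq point) (x : point) : Prop :=
  exists w : 'I_(size S) -> R,
    (forall i, 0 <= w i) /\ \sum_(i < size S) w i = 1 /\
    x = \sum_(i < size S) w i *: S`_i.

Definition is_polytope (Q : point -> Prop) : Prop :=
  exists S : seq point, forall x, Q x <-> conv S x.

Definition is_vertex (Q : point -> Prop) (v : point) : Prop :=
  Q v /\ forall x y (t : R), Q x -> Q y -> 0 < t -> t < 1 ->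
    v = (1 - t) *: x + t *: y -> x = y.

Definition diff_set (Q : point -> Prop) (k : point) : Prop :=
  exists x y, Q x /\ Q y /\ k = x - y.

Definition translate_neg (Q : point -> Prop) (k : point) (z : point) : Prop :=
  exists x, Q x /\ z = x - k.

Definition uniquely_formed (Q : point -> Prop) (k : point) : Prop :=
  exists s1 s2, (Q s1 /\ Q s2 /\ s1 - s2 = k) /\
    forall t1 t2, Q t1 -> Q t2 -> t1 - t2 = k -> t1 = s1 /\ t2 = s2.

Definition supporting (Q : point -> Prop) (c : point) (a : R) : Prop :=
  c != 0 /\
  ((forall x, Q x -> dot c x <= a) \/ (forall x, Q x -> a <= dot c x)) /\
  exists x, Q x /\ dot c x = a.

Definition strictly_antipodal (Q : point -> Prop) (u v : point) : Prop :=
  is_vertex Q u /\ is_vertex Q v /\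
  exists (c : point) (a b : R),
    a != b /\ supporting Q c a /\ supporting Q c b /\
    (forall x, (Q x /\ dot c x = a) <-> x = u) /\
    (forall x, (Q x /\ dot c x = b) <-> x = v).

Definition supp_cone (Q : point -> Prop) (v : point) (z : point) : Prop :=
  exists (lam : R) (q : point), 0 <= lam /\ Q q /\ z = v + lam *: (q - v).

(* locally point symmetric: the vertices are partitioned into pairs {u, v}
   (encoded as a fixed-point-free involution sigma on the vertex set) of
   strictly antipodal vertices with C(u) - u = v - C(v). *)
Definition locally_point_symmetric (Q : point -> Prop) : Prop :=
  is_polytope Q /\
  exists sigma : point -> point,
    forall u, is_vertex Q u ->
      [/\ is_vertex Q (sigma u), sigma u != u, sigma (sigma u) = u,
          strictly_antipodal Q u (sigma u) &
          forall z, (exists y, supp_cone Q u y /\ z = y - u) <->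
                    (exists y, supp_cone Q (sigma u) y /\ z = sigma u - y)].

End Defs.

(** If [k = s1 - s2] is formed only by the pair [(s1, s2)], then no nonzero
    direction [d] can be followed a little from both [s1] and [s2] inside [Q],
    since [(s1 + a d) - (s2 + a d)] would be a second representation of [k].
    Every point [x] of a polytope sees a small homothetic copy [x + e (Q - u)]
    of [Q] around some vertex [u]; for [s2] with vertex [w], local point
    symmetry turns the directions [w' - C(w')] at the partner [w'] of [w] into
    feasible directions at [s2].  Comparing with the copy of [Q] at [s1] around
    its vertex [u] forces successively [w' = u], [s1 = u] and [s2 = w], so
    [k] is a difference of strictly antipodal vertices.  Conversely, a
    functional maximised only at [u] and minimised only at [v] on [Q] is
    maximised only at [u - v] on [Q - Q], which makes [u - v] a vertex, and a
    vertex of [Q - Q] is uniquely formed by a midpoint argument. *)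

From HB Require Import structures.
From mathcomp Require Import all_boot all_order all_algebra.
From mathcomp Require Import reals.
From mathcomp Require Import ring lra.
From Stdlib Require Import Classical.
Set Implicit Arguments. Unset Strict Implicit. Unset Printing Implicit Defensive.
Import Order.TTheory GRing.Theory Num.Theory.
Local Open Scope ring_scope.

Lemma convex_comb_at_bound (R : realFieldType) (m r s t : R) :
  0 < t -> t < 1 -> r <= m -> s <= m -> (1 - t) * r + t * s = m -> r = m /\ s = m.
Proof. by move=> *; split; nra. Qed.

Section ConvexHull.
Variables (R : realType) (D : nat).
Notation point := 'rV[R]_D.

Definition hull n (f : 'I_n -> point) (x : point) : Prop :=
  exists w : 'I_n -> R, (forall i, 0 <= w i) /\ \sum_(i < n) w i = 1 /\
    x = \sum_(i < n) w i *: f i.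

Lemma hull_comb n (f : 'I_n -> point) p q t :
  hull f p -> hull f q -> 0 <= t -> t <= 1 -> hull f ((1 - t) *: p + t *: q).
Proof.
move=> [a [a0 [a1 ->]]] [b [b0 [b1 ->]]] t0 t1.
exists (fun i => (1 - t) * a i + t * b i); split; [|split].
- by move=> i; apply: addr_ge0; apply: mulr_ge0; rewrite ?subr_ge0.
- by rewrite big_split /= -!mulr_sumr a1 b1 !mulr1 subrK.
- by rewrite !scaler_sumr -big_split; apply: eq_bigr => i _; rewrite [RHS]scalerDl !scalerA.
Qed.

Lemma hull_generator n (f : 'I_n -> point) j : hull f (f j).
Proof.
exists (fun i => (i == j)%:R); split; [|split].
- by move=> i; rewrite ler0n.
- by rewrite (bigD1 j) //= eqxx big1 ?addr0 // => i /negbTE ->.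
- by rewrite (bigD1 j) //= eqxx scale1r big1 ?addr0 // => i /negbTE ->; rewrite scale0r.
Qed.

Lemma comb_full_weight n (f : 'I_n -> point) (c : 'I_n -> R) j :
  (forall i, 0 <= c i) -> \sum_(i < n) c i = 1 -> c j = 1 ->
  \sum_(i < n) c i *: f i = f j.
Proof.
move=> c0 c1 cj; rewrite (bigD1 j) //= cj scale1r big1 ?addr0 // => i ij.
have rest : \sum_(i < n | i != j) c i = 0 by move: c1; rewrite (bigD1 j) //= cj; lra.
by rewrite (psumr_eq0P (fun i _ => c0 i) rest) ?scale0r.
Qed.

Lemma hull_drop_light_generator m (f : 'I_m.+1 -> point) (c : 'I_m.+1 -> R) j :
  (forall i, 0 <= c i) -> \sum_(i < m.+1) c i = 1 -> c j < 1 ->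
  f j = \sum_(i < m.+1) c i *: f i -> hull (f \o lift j) (f j).
Proof.
move=> c0 c1 cj Ec.
have cj_neq1 : 1 - c j != 0 by rewrite subr_eq0 eq_sym (lt_eqF cj).
have rest : \sum_(i < m) c (lift j i) = 1 - c j.
  by move: c1; rewrite (bigD1_ord j) //= => <-; rewrite addrC addrK.
have rest_comb : \sum_(i < m) c (lift j i) *: f (lift j i) = (1 - c j) *: f j.
  by rewrite scalerBl scale1r {1}Ec (bigD1_ord j) //= addrAC subrr add0r.
exists (fun i => c (lift j i) / (1 - c j)); split; [|split].
- by move=> i; apply: divr_ge0 => //; rewrite subr_ge0 ltW.
- by rewrite -mulr_suml rest divff.
- under eq_bigr => i _ do rewrite mulrC -scalerA.
  by rewrite -scaler_sumr rest_comb scalerA mulVf // scale1r.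
Qed.

Lemma hull_drop_redundant m (f : 'I_m.+1 -> point) j :
  hull (f \o lift j) (f j) -> forall z, hull f z <-> hull (f \o lift j) z.
Proof.
move=> [d [d0 [d1 Ed]]] z; split => [[w [w0 [w1 ->]]]|[w [w0 [w1 ->]]]].
- exists (fun i => w (lift j i) + w j * d i); split; [|split].
  + by move=> i; apply: addr_ge0 => //; apply: mulr_ge0.
  + by rewrite big_split /= -mulr_sumr d1 mulr1 addrC -(bigD1_ord j (P := predT)).
  + rewrite (bigD1_ord j) //= {1}Ed scaler_sumr addrC -big_split /=.
    by apply: eq_bigr => i _; rewrite scalerDl scalerA.
- exists (fun i => oapp w 0 (unlift j i)); split; [|split].
  + by move=> i; case: (unlift j i).
  + by rewrite (bigD1_ord j) //= unlift_none add0r; under eq_bigr => i _ do rewrite liftK.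
  + rewrite (bigD1_ord j) //= unlift_none scale0r add0r.
    by under [RHS]eq_bigr => i _ do rewrite liftK.
Qed.

Variable Q : point -> Prop.

Lemma vertex_of_irredundant_generator m (f : 'I_m.+1 -> point) j :
  (forall z, Q z <-> hull f z) -> ~ hull (f \o lift j) (f j) -> is_vertex Q (f j).
Proof.
move=> HQ irredundant; split; first by apply/HQ; exact: hull_generator.
move=> a b t /HQ [al [al0 [al1 Ea]]] /HQ [be [be0 [be1 Eb]]] t0 t1 Ej.
pose c i := (1 - t) * al i + t * be i.
have c0 i : 0 <= c i.
  by apply: addr_ge0; apply: mulr_ge0; rewrite ?subr_ge0 // ltW.
have c1 : \sum_(i < m.+1) c i = 1.
  by rewrite big_split /= -!mulr_sumr al1 be1 !mulr1 subrK.
have Ec : f j = \sum_(i < m.+1) c i *: f i.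
  rewrite Ej Ea Eb !scaler_sumr -big_split /=.
  by apply: eq_bigr => i _; rewrite [RHS]scalerDl !scalerA.
have weight_le1 (w : 'I_m.+1 -> R) : (forall i, 0 <= w i) -> \sum_i w i = 1 -> w j <= 1.
  by move=> w0 w1; rewrite -w1 (bigD1 j) //= lerDl sumr_ge0.
have [cj_lt1|cj_ge1] := ltrP (c j) 1.
  by case: irredundant; exact: hull_drop_light_generator c0 c1 cj_lt1 Ec.
have cj1 : c j = 1 by have := weight_le1 _ c0 c1; lra.
have [alj1 bej1] := convex_comb_at_bound t0 t1 (weight_le1 _ al0 al1)
  (weight_le1 _ be0 be1) cj1.
by rewrite Ea Eb (comb_full_weight f al0 al1 alj1) (comb_full_weight f be0 be1 bej1).
Qed.

Lemma hull_of_vertices n (f : 'I_n -> point) :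
  (forall z, Q z <-> hull f z) ->
  exists m (g : 'I_m -> point), (forall z, Q z <-> hull g z) /\
    forall i, is_vertex Q (g i).
Proof.
elim: n f => [|n IH] f HQ; first by exists 0, f; split => // [[]].
have [all_vertices|/not_all_ex_not [j nonvertex]] :=
  classic (forall i, is_vertex Q (f i)).
  by exists n.+1, f.
have redundant : hull (f \o lift j) (f j).
  by apply: NNPP => irr; apply: nonvertex; exact: vertex_of_irredundant_generator irr.
by apply: (IH (f \o lift j)) => z; apply: iff_trans (HQ z) (hull_drop_redundant redundant z).
Qed.

(* If the vertex [f i] has weight [w i > 0] in [x], trading the summand
   [w i *: f i] for [w i *: q] with [q] in the hull stays in the hull. *)
Lemma polytope_homothety_at_vertex x : is_polytope Q -> Q x ->
  exists u e, is_vertex Q u /\ 0 < e /\ forall q, Q q -> Q (x + e *: (q - u)).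
Proof.
move=> [S HS] Qx; have [n [f [HQ vertices]]] := @hull_of_vertices _ _ HS.
have [w [w0 [w1 Ex]]] := proj1 (HQ x) Qx.
have [i wi] : exists i, 0 < w i.
  apply: NNPP => none; move/eqP: w1; apply/negP.
  rewrite big1 ?(eq_sym 0) ?oner_eq0 // => i _.
  by apply/eqP; rewrite eq_le w0 andbT leNgt; apply/negP => wi; apply: none; exists i.
exists (f i), (w i); split; first exact: vertices.
split => // q /HQ [v [v0 [v1 ->]]].
apply/HQ; exists (fun j => w j + w i * v j - (j == i)%:R * w i); split; [|split].
- move=> j; case: (j =P i) => [->|_].
    by rewrite mul1r addrC addKr; apply: mulr_ge0 => //; exact: ltW.
  by rewrite mul0r subr0; apply: addr_ge0 => //; apply: mulr_ge0 => //; exact: ltW.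
- rewrite sumrB big_split /= -mulr_sumr w1 v1 mulr1.
  by rewrite (bigD1 i) //= eqxx mul1r big1 ?addr0 ?addrK // => j /negbTE ->; rewrite mul0r.
- under [RHS]eq_bigr => j _ do rewrite scalerBl scalerDl -scalerA.
  rewrite sumrB big_split /= -scaler_sumr -Ex scalerBr addrA.
  congr (_ - _); rewrite (bigD1 i) //= eqxx mul1r big1 ?addr0 // => j /negbTE ->.
  by rewrite mul0r scale0r.
Qed.

Lemma polytope_convex p q t : is_polytope Q -> Q p -> Q q -> 0 <= t -> t <= 1 ->
  Q ((1 - t) *: p + t *: q).
Proof. by move=> [S HS] /HS Qp /HS Qq t0 t1; apply/HS; exact: hull_comb. Qed.

Lemma polytope_segment x d a s : is_polytope Q -> Q x -> Q (x + a *: d) ->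
  0 < a -> 0 <= s -> s <= a -> Q (x + s *: d).
Proof.
move=> HP Qx Qa a0 s0 sa.
have -> : x + s *: d = (1 - s / a) *: x + (s / a) *: (x + a *: d).
  by rewrite scalerDr scalerA divfK ?gt_eqF // addrA -scalerDl subrK scale1r.
apply: polytope_convex => //; first by rewrite divr_ge0 // ltW.
by rewrite ler_pdivrMr // mul1r.
Qed.

Lemma supp_cone_of_mem p q : Q q -> supp_cone Q p q.
Proof. by move=> Qq; exists 1, q; rewrite scale1r addrC subrK. Qed.

Lemma mirrored_cone_direction (w w' x y : point) e :
  (forall z, (exists y, supp_cone Q w y /\ z = y - w) <->
             (exists y, supp_cone Q w' y /\ z = w' - y)) ->
  0 < e -> (forall q, Q q -> Q (x + e *: (q - w))) -> supp_cone Q w' y ->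
  w' - y = 0 \/ exists2 b, 0 < b & Q (x + b *: (w' - y)).
Proof.
move=> cones e0 homothety cone_y.
have [z [[lam [q [lam0 [Qq ->]]]] ->]] := proj2 (cones (w' - y)) (ex_intro _ y (conj cone_y erefl)).
have [->|lam_neq0] := eqVneq lam 0; first by left; rewrite scale0r addr0 subrr.
right; exists (e / lam); first by rewrite divr_gt0 // lt_def lam_neq0.
by rewrite addrAC subrr add0r scalerA divfK //; apply: homothety.
Qed.

End ConvexHull.

Section Differences.
Variables (R : realType) (D : nat).
Notation point := 'rV[R]_D.
Variable Q : point -> Prop.

Lemma dotNl (c x : point) : dot (- c) x = - dot c x.
Proof. by rewrite /dot -sumrN; apply: eq_bigr => i _; rewrite mxE mulNr. Qed.

Lemma dotBr (c x y : point) : dot c (x - y) = dot c x - dot c y.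
Proof. by rewrite /dot -sumrB; apply: eq_bigr => i _; rewrite !mxE mulrBr. Qed.

Lemma dot_comb (c p q : point) t :
  dot c ((1 - t) *: p + t *: q) = (1 - t) * dot c p + t * dot c q.
Proof.
by rewrite /dot !mulr_sumr -big_split; apply: eq_bigr => i _; rewrite !mxE /=; ring.
Qed.

Lemma single_intersection_iff_uniquely_formed k :
  (exists z, forall y, (Q y /\ translate_neg Q k y) <-> y = z) <-> uniquely_formed Q k.
Proof.
split => [[z Hz]|[s1 [s2 [[Q1 [Q2 E]] unique]]]].
- have [Qz [x [Qx Ez]]] := proj2 (Hz z) erefl.
  have Exz : x - z = k by rewrite Ez opprB addrC subrK.
  exists x, z; split => // t1 t2 Q1 Q2 Et.
  have t2z : t2 = z by apply/Hz; split => //; exists t1; rewrite -Et opprB addrC subrK.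
  by split => //; rewrite -(subrK t2 t1) Et t2z -Exz subrK.
- exists s2 => y; split => [[Qy [x [Qx Ey]]]|->].
    have Exy : x - y = k by rewrite Ey opprB addrC subrK.
    by have [_ ->] := unique x y Qx Qy Exy.
  by split => //; exists s1; rewrite -E opprB addrC subrK.
Qed.

Lemma diff_vertex_uniquely_formed k : is_vertex (diff_set Q) k -> uniquely_formed Q k.
Proof.
move=> [[s1 [s2 [Q1 [Q2 E]]]] extreme]; exists s1, s2; split => // t1 t2 T1 T2 Et.
have half_gt0 : (0 : R) < 2^-1 by rewrite invr_gt0 ltr0n.
have half_lt1 : (2^-1 : R) < 1 by rewrite invf_lt1 ?ltr0n // ltr1n.
have cross : s1 - t2 = t1 - s2.
  apply: (extreme _ _ 2^-1) => //; [by exists s1, t2|by exists t1, s2|].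
  by apply/rowP => i; move/rowP: E => /(_ i); move/rowP: Et => /(_ i); rewrite !mxE; lra.
by move/rowP: cross => cross; move/rowP: E => E; move/rowP: Et => Et;
  split; apply/rowP => i; move: (cross i) (E i) (Et i); rewrite !mxE; lra.
Qed.

Lemma exposed_diff_vertex (c u v : point) : Q u -> Q v ->
  (forall x, Q x -> dot c x <= dot c u) -> (forall x, Q x -> dot c v <= dot c x) ->
  (forall x, Q x -> dot c x = dot c u -> x = u) ->
  (forall x, Q x -> dot c x = dot c v -> x = v) ->
  is_vertex (diff_set Q) (u - v).
Proof.
move=> Qu Qv max_u min_v only_u only_v; split; first by exists u, v.
move=> p q t [x1 [y1 [Qx1 [Qy1 ->]]]] [x2 [y2 [Qx2 [Qy2 ->]]]] t0 t1 E.
have := congr1 (dot c) E; rewrite dot_comb !dotBr => Edot.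
have bound x y : Q x -> Q y -> dot c x - dot c y <= dot c u - dot c v.
  by move=> Qx Qy; have := max_u _ Qx; have := min_v _ Qy; lra.
have [E1 E2] := convex_comb_at_bound t0 t1 (bound _ _ Qx1 Qy1) (bound _ _ Qx2 Qy2)
  (esym Edot).
have on_faces x y : Q x -> Q y -> dot c x - dot c y = dot c u - dot c v -> x = u /\ y = v.
  move=> Qx Qy Exy; have := max_u _ Qx; have := min_v _ Qy => vy xu.
  by split; [apply: only_u|apply: only_v] => //; lra.
have [-> ->] := on_faces _ _ Qx1 Qy1 E1.
by have [-> ->] := on_faces _ _ Qx2 Qy2 E2.
Qed.

Lemma antipodal_diff_vertex u v : strictly_antipodal Q u v -> is_vertex (diff_set Q) (u - v).
Proof.
move=> [_ [_ [c [a [b [ab [[_ [side_a _]] [[_ [side_b _]] [at_a at_b]]]]]]]]].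
have [Qu cu] := proj2 (at_a u) erefl; have [Qv cv] := proj2 (at_b v) erefl.
have only_u x : Q x -> dot c x = a -> x = u by move=> Qx cx; apply/at_a.
have only_v x : Q x -> dot c x = b -> x = v by move=> Qx cx; apply/at_b.
have distinct : a <= b -> b <= a -> False by move=> ab' ba; move/negP: ab; rewrite eq_le ab' ba.
case: side_a => side_a; case: side_b => side_b.
- by move: (side_a _ Qv) (side_b _ Qu); rewrite cu cv => ba ab'; case: (distinct ab' ba).
- by apply: (exposed_diff_vertex (c := c)); rewrite ?cu ?cv.
- apply: (exposed_diff_vertex (c := - c)); rewrite ?dotNl ?cu ?cv //.
  + by move=> x Qx; rewrite dotNl lerN2; apply: side_a.
  + by move=> x Qx; rewrite dotNl lerN2; apply: side_b.
  + by move=> x Qx; rewrite dotNl => /oppr_inj; apply: only_u.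
  + by move=> x Qx; rewrite dotNl => /oppr_inj; apply: only_v.
- by move: (side_a _ Qv) (side_b _ Qu); rewrite cu cv => ab' ba; case: (distinct ab' ba).
Qed.

Lemma unique_pair_no_common_direction s1 s2 d a b : is_polytope Q ->
  (forall t1 t2, Q t1 -> Q t2 -> t1 - t2 = s1 - s2 -> t1 = s1 /\ t2 = s2) ->
  Q s1 -> Q s2 -> 0 < a -> 0 < b -> Q (s1 + a *: d) -> Q (s2 + b *: d) -> d = 0.
Proof.
move=> HP unique Q1 Q2 a0 b0 Qa Qb.
have common e : 0 < e -> Q (s1 + e *: d) -> Q (s2 + e *: d) -> d = 0.
  move=> e0 Q1e Q2e.
  have shift : (s1 + e *: d) - (s2 + e *: d) = s1 - s2.
    by rewrite opprD addrACA subrr addr0.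
  have [/eqP shifted _] := unique _ _ Q1e Q2e shift.
  by move: shifted; rewrite -subr_eq0 addrC addKr scaler_eq0 (gt_eqF e0) => /eqP.
have [ab|ba] := lerP a b.
  by apply: (common a) => //; exact: polytope_segment HP Q2 Qb b0 (ltW a0) ab.
by apply: (common b) => //; exact: polytope_segment HP Q1 Qa a0 (ltW b0) (ltW ba).
Qed.

Lemma uniquely_formed_antipodal k : locally_point_symmetric Q ->
  uniquely_formed Q k -> exists u v, strictly_antipodal Q u v /\ k = u - v.
Proof.
move=> [HP [sigma partner]] [s1 [s2 [[Q1 [Q2 <-]] unique]]].
have common_trivial d : (exists2 a, 0 < a & Q (s1 + a *: d)) ->
    (exists2 b, 0 < b & Q (s2 + b *: d)) -> d = 0.
  by move=> [a a0 Qa] [b b0 Qb]; exact: unique_pair_no_common_direction HP _ Q1 Q2 a0 b0 Qa Qb.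
have [u [e1 [Vu [e1_gt0 near_s1]]]] := polytope_homothety_at_vertex HP Q1.
have [w [e2 [Vw [e2_gt0 near_s2]]]] := polytope_homothety_at_vertex HP Q2.
have [Vw' _ sigma_sigma_w _ cones_w] := partner w Vw.
have [_ _ _ antipodal_u cones_u] := partner u Vu.
have sigma_w : sigma w = u.
  apply/eqP; rewrite -subr_eq0; apply/eqP.
  have [//|s2_dir] := mirrored_cone_direction cones_w e2_gt0 near_s2 (supp_cone_of_mem _ Vu.1).
  apply: common_trivial _ _ s2_dir; exists e1 => //; exact: near_s1 _ Vw'.1.
have s1_u : s1 = u.
  apply/eqP; rewrite eq_sym -subr_eq0 -sigma_w; apply/eqP.
  have [//|s2_dir] := mirrored_cone_direction cones_w e2_gt0 near_s2 (supp_cone_of_mem _ Q1).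
  apply: common_trivial _ _ s2_dir; exists 1 => //; rewrite scale1r addrC subrK; exact: Vw'.1.
have sigma_u : sigma u = w by rewrite -sigma_w sigma_sigma_w.
have s2_w : s2 = w.
  apply/eqP; rewrite eq_sym -subr_eq0 -sigma_u; apply/eqP.
  have [//|s1_dir] := mirrored_cone_direction cones_u e1_gt0 near_s1 (supp_cone_of_mem _ Q2).
  apply: common_trivial _ s1_dir _; exists 1 => //; rewrite scale1r addrC subrK sigma_u; exact: Vw.1.
by exists u, w; rewrite s1_u s2_w -sigma_u.
Qed.

End Differences.

Theorem lemma13 (R : realType) (D : nat) (Q : 'rV[R]_D -> Prop) (k : 'rV[R]_D) :
  locally_point_symmetric Q -> diff_set Q k ->
  [/\ ((exists z, forall y, (Q y /\ translate_neg Q k y) <-> y = z)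
         <-> uniquely_formed Q k),
      (uniquely_formed Q k <-> is_vertex (diff_set Q) k) &
      (is_vertex (diff_set Q) k <->
         exists u v, strictly_antipodal Q u v /\ k = u - v)].
Proof.
move=> LPS _.
have iii_ii : (exists u v, strictly_antipodal Q u v /\ k = u - v) ->
    is_vertex (diff_set Q) k.
  by move=> [u [v [antipodal ->]]]; exact: antipodal_diff_vertex.
have i_iii := @uniquely_formed_antipodal _ _ Q k LPS.
have ii_i := @diff_vertex_uniquely_formed _ _ Q k.
split; first exact: single_intersection_iff_uniquely_formed.
  by split => [/i_iii /iii_ii|].
by split => [/ii_i /i_iii|].
Qed.
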